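(* Let $\mathcal L_{\mathcal N}=(\mathcal L,[\cdot_\lambda\cdot]_{\mathcal L},\mathcal N)$ and $\mathcal H_{\mathcal Q}=(\mathcal H,[\cdot_\lambda\cdot]_{\mathcal H},\mathcal Q)$ be Nijenhuis Lie conformal algebras, let $(\chi_\lambda,\rho,\Phi)$ be a non-abelian $2$-cocycle of $\mathcal L_{\mathcal N}$ with values in $\mathcal H_{\mathcal Q}$ (arising from a non-abelian extension of $\mathcal L_{\mathcal N}$ by $\mathcal H_{\mathcal Q}$ and a section), and let $(\alpha,\beta)\in\mathrm{Aut}(\mathcal H_{\mathcal Q})\times\mathrm{Aut}(\mathcal L_{\mathcal N})$. Define $$\chi^{(\alpha,\beta)}_\lambda(p,q):=\alpha\big(\chi_\lambda(\beta^{-1}(p),\beta^{-1}(q))\big),\quad \rho^{(\alpha,\beta)}(p)_\lambda h:=\alpha\big(\rho(\beta^{-1}(p))_\lambda\alpha^{-1}(h)\big),\quad \Phi^{(\alpha,\beta)}(p):=\alpha\big(\Phi(\beta^{-1}(p))\big)$$ for $p,q\in\mathcal L$, $h\in\mathcal H$. Then $(\chi^{(\alpha,\beta)}_\lambda,\rho^{(\alpha,\beta)},\Phi^{(\alpha,\beta)})$ is a non-abelian $2$-cocycle of $\mathcal L_{\mathcal N}$ with values in $\mathcal H_{\mathcal Q}$.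
   Context: All spaces are over $\mathbb C$. A Lie conformal algebra is a $\mathbb C[\partial]$-module with a $\mathbb C$-bilinear $\lambda$-bracket satisfying $[\partial a_\lambda b]=-\lambda[a_\lambda b]$, $[a_\lambda\partial b]=(\partial+\lambda)[a_\lambda b]$, $[a_\lambda b]=-[b_{-\partial-\lambda}a]$, $[a_\lambda[b_\mu c]]=[[a_\lambda b]_{\lambda+\mu}c]+[b_\mu[a_\lambda c]]$. A Nijenhuis operator is a $\mathbb C[\partial]$-linear $\mathcal N$ with $[\mathcal N(p)_\lambda\mathcal N(q)]=\mathcal N([\mathcal N(p)_\lambda q]+[p_\lambda\mathcal N(q)]-\mathcal N([p_\lambda q]))$; a Nijenhuis Lie conformal algebra is a Lie conformal algebra with a Nijenhuis operator; $\mathrm{Aut}(\cdot)$ is the group of bijective bracket-preserving $\mathbb C[\partial]$-linear self-maps commuting with the Nijenhuis operator. A non-abelian $2$-cocycle of $\mathcal L_{\mathcal N}$ with values in $\mathcal H_{\mathcal Q}$ is a triple $\chi_\lambda:\mathcal L\otimes\mathcal L\to\mathcal H[\lambda]$, $\rho:\mathcal L\otimes\mathcal H\to\mathcal H[\lambda]$, $\Phi:\mathcal L\to\mathcal H$ satisfying for all $p,q,r\in\mathcal L$, $h\in\mathcal H$: (i) $\rho(p)_\lambda\rho(q)_\mu h-\rho(q)_\mu\rho(p)_\lambda h-\rho([p_\lambda q]_{\mathcal L})_{\lambda+\mu}h=[\chi_\lambda(p,q)_{\lambda+\mu}h]_{\mathcal H}$; (ii) $\rho(p)_\lambda\chi_\mu(q,r)+\rho(q)_\mu\chi_\lambda(r,p)+\rho(r)_{-\partial-\lambda-\mu}\chi_\lambda(p,q)-\chi_{\lambda+\mu}([q_\mu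 r]_{\mathcal L},p)-\chi_{\lambda+\mu}([r_{-\partial-\lambda}p]_{\mathcal L},q)-\chi_{\lambda+\mu}([p_\lambda q]_{\mathcal L},r)=0$; (iii) $\rho(\mathcal Np)_\lambda\mathcal Q(h)=\mathcal Q(\rho(\mathcal Np)_\lambda h+\rho(p)_\lambda\mathcal Q(h)-\mathcal Q(\rho(p)_\lambda h))+\mathcal Q([\Phi(p)_\lambda h]_{\mathcal H})-[\Phi(p)_\lambda\mathcal Q(h)]_{\mathcal H}$; (iv) $\chi_\lambda(\mathcal Np,\mathcal Nq)-\mathcal Q(\chi_\lambda(\mathcal Np,q)+\chi_\lambda(p,\mathcal Nq)-\mathcal Q\chi_\lambda(p,q))-\Phi([\mathcal N(p)_\lambda q]_{\mathcal L}+[p_\lambda\mathcal N(q)]_{\mathcal L}-\mathcal N[p_\lambda q]_{\mathcal L})+\rho(\mathcal Np)_\lambda\Phi(q)-\rho(\mathcal Nq)_{-\partial-\lambda}\Phi(p)+\mathcal Q(\rho(q)_{-\partial-\lambda}\Phi(p)-\rho(p)_\lambda\Phi(q)+\Phi([p_\lambda q]_{\mathcal L}))+[\Phi(p)_\lambda\Phi(q)]_{\mathcal H}=0$. Such a triple arises from a non-abelian extension $0\to\mathcal H_{\mathcal Q}\to\mathcal E_{\mathcal R}\xrightarrow{proj}\mathcal L_{\mathcal N}\to0$ (a $\mathbb C[\partial]$-split short exact sequence of Nijenhuis Lie conformal algebras) and a $\mathbb C[\partial]$-linear section $s$ of $proj$ via $\chi_\lambda(p,q)=[s(p)_\lambda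 s(q)]_{\mathcal E}-s([p_\lambda q]_{\mathcal L})$, $\rho(p)_\lambda h=[s(p)_\lambda h]_{\mathcal E}$, $\Phi(p)=\mathcal R(s(p))-s(\mathcal N(p))$. *)

From Stdlib Require Import ClassicalEpsilon.
From mathcomp Require Import all_boot all_order all_algebra.
From mathcomp Require Import complex.
From mathcomp Require Import Rstruct.
Set Implicit Arguments. Unset Strict Implicit. Unset Printing Implicit Defensive.
Import Order.TTheory GRing.Theory Num.Theory.
Local Open Scope ring_scope.

Definition C : fieldType := (Rdefinitions.R)[i].

Section Defs.

(* Polynomials V[lambda] with coefficients in a C-vector space V are   *)
(* represented by their coefficient sequences f : nat -> V             *)
(* (f n = coefficient of lambda^n) with finite support.                *)

Definition local (V : lmodType C) (f : nat -> V) : Prop :=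
  exists N : nat, forall n : nat, (N <= n)%N -> f n = 0.

(* a bound on the support (meaningful when f is local) *)
Definition pdeg (V : lmodType C) (f : nat -> V) : nat :=
  epsilon (inhabits 0%N) (fun N => forall n : nat, (N <= n)%N -> f n = 0).

(* With T = (l *: _) this is
   evaluation at the scalar l; with T = (-d - l) (d the derivation) this is
   the usual substitution lambda := -d - l of conformal algebra theory. *)
Definition pev (V : lmodType C) (f : nat -> V) (T : V -> V) : V :=
  \sum_(i < pdeg f) iter i T (f i).

Definition sc (V : lmodType C) (l : C) : V -> V := fun v => l *: v.
Definition mdsc (V : lmodType C) (d : V -> V) (l : C) : V -> V :=
  fun v => - d v - l *: v.

Definition lb (A B X : lmodType C) (f : nat -> A -> B -> X)
  (a : A) (b : B) (T : X -> X) : X := pev (fun n => f n a b) T.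

Definition lin (A B : lmodType C) (f : A -> B) : Prop :=
  forall (k : C) (u v : A), f (k *: u + v) = k *: f u + f v.
Definition bilin (A B X : lmodType C) (f : A -> B -> X) : Prop :=
  (forall b, lin (fun a => f a b)) /\ (forall a, lin (f a)).

Definition lmap (A B X : lmodType C) (f : nat -> A -> B -> X) : Prop :=
  (forall n, bilin (f n)) /\ (forall a b, local (fun n => f n a b)).

(* Lie conformal algebras.  V is a C[d]-module (C-vector space with the *)
(* C-linear operator d), and [a_lambda b] = sum_n lambda^n br n a b.    *)
(* Polynomial identities in lambda (resp. lambda, mu) are stated for all *)
(* scalar values of lambda (resp. lambda, mu), which over the infinite  *)
(* field C is the same as equality of polynomials.                     *)
Definition is_LCA (V : lmodType C) (d : V -> V) (br : nat -> V -> V -> V) :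
    Prop :=
  lin d /\ lmap br /\
      (forall a b (l : C), lb br (d a) b (sc l) = - (l *: lb br a b (sc l))) /\
      (forall a b (l : C),
          lb br a (d b) (sc l) = d (lb br a b (sc l)) + l *: lb br a b (sc l)) /\
      (forall a b (l : C), lb br a b (sc l) = - lb br b a (mdsc d l)) /\
      (forall a b c (l m : C),
          lb br a (lb br b c (sc m)) (sc l) =
          lb br (lb br a b (sc l)) c (sc (l + m)) +
          lb br b (lb br a c (sc l)) (sc m)).

Definition is_nijenhuis (V : lmodType C) (d : V -> V)
    (br : nat -> V -> V -> V) (N : V -> V) : Prop :=
  [/\ lin N, (forall v, N (d v) = d (N v)) &
      (forall p q (l : C),
          lb br (N p) (N q) (sc l) =
          N (lb br (N p) q (sc l) + lb br p (N q) (sc l)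
             - N (lb br p q (sc l))))].

Record NLCA (V : lmodType C) : Type := MkNLCA {
  dd : V -> V;
  br : nat -> V -> V -> V;
  nij : V -> V;
  NLCA_LCA : is_LCA dd br;
  NLCA_nij : is_nijenhuis dd br nij
}.

Definition is_aut (V : lmodType C) (A : NLCA V) (f : V -> V) : Prop :=
  [/\ bijective f, lin f, (forall v, f (dd A v) = dd A (f v)),
      (forall a b (l : C), f (lb (br A) a b (sc l)) =
                           lb (br A) (f a) (f b) (sc l)) &
      (forall v, f (nij A v) = nij A (f v))].

Definition is_na_cocycle (L H : lmodType C) (AL : NLCA L) (AH : NLCA H)
    (chi : nat -> L -> L -> H) (rho : nat -> L -> H -> H) (Phi : L -> H) :
    Prop :=
  let dL := dd AL in let bL := br AL in let N := nij AL in
  let dH := dd AH in let bH := br AH in let Q := nij AH in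
  lmap chi /\ lmap rho /\ lin Phi /\
  (forall p q (h : H) (l m : C),
     lb rho p (lb rho q h (sc m)) (sc l) - lb rho q (lb rho p h (sc l)) (sc m)
     - lb rho (lb bL p q (sc l)) h (sc (l + m))
     = lb bH (lb chi p q (sc l)) h (sc (l + m))) /\
  (forall p q r (l m : C),
     lb rho p (lb chi q r (sc m)) (sc l)
     + lb rho q (lb chi r p (sc l)) (sc m)
     + lb rho r (lb chi p q (sc l)) (mdsc dH (l + m))
     - lb chi (lb bL q r (sc m)) p (sc (l + m))
     - lb chi (lb bL r p (mdsc dL l)) q (sc (l + m))
     - lb chi (lb bL p q (sc l)) r (sc (l + m)) = 0) /\
  (forall p (h : H) (l : C),
     lb rho (N p) (Q h) (sc l) =
     Q (lb rho (N p) h (sc l) + lb rho p (Q h) (sc l)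
        - Q (lb rho p h (sc l)))
     + Q (lb bH (Phi p) h (sc l)) - lb bH (Phi p) (Q h) (sc l)) /\
  (forall p q (l : C),
     lb chi (N p) (N q) (sc l)
     - Q (lb chi (N p) q (sc l) + lb chi p (N q) (sc l)
          - Q (lb chi p q (sc l)))
     - Phi (lb bL (N p) q (sc l) + lb bL p (N q) (sc l)
            - N (lb bL p q (sc l)))
     + lb rho (N p) (Phi q) (sc l)
     - lb rho (N q) (Phi p) (mdsc dH l)
     + Q (lb rho q (Phi p) (mdsc dH l) - lb rho p (Phi q) (sc l)
          + Phi (lb bL p q (sc l)))
     + lb bH (Phi p) (Phi q) (sc l) = 0).

Definition chi_ab (L H : lmodType C) (alpha : H -> H) (bi : L -> L)
    (chi : nat -> L -> L -> H) : nat -> L -> L -> H :=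
  fun n p q => alpha (chi n (bi p) (bi q)).
Definition rho_ab (L H : lmodType C) (alpha ai : H -> H) (bi : L -> L)
    (rho : nat -> L -> H -> H) : nat -> L -> H -> H :=
  fun n p h => alpha (rho n (bi p) (ai h)).
Definition Phi_ab (L H : lmodType C) (alpha : H -> H) (bi : L -> L)
    (Phi : L -> H) : L -> H :=
  fun p => alpha (Phi (bi p)).

End Defs.

From Stdlib Require Import ClassicalEpsilon.
From HB Require Import structures.
From mathcomp Require Import all_boot all_order all_algebra.
Set Implicit Arguments. Unset Strict Implicit. Unset Printing Implicit Defensive.
Import GRing.Theory.
Local Open Scope ring_scope.

(* Each cocycle identity for the transformed triple at (p, q, r, h) is the
   image under alpha of the original identity at (beta^-1 p, beta^-1 q,
   beta^-1 r, alpha^-1 h): alpha and beta^-1 are automorphisms, so they commute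
   with the brackets, the derivations and the Nijenhuis operators, and a linear
   map intertwining two operators T, T' carries evaluation of a lambda-polynomial
   at T to evaluation at T'.  That beta^-1 also preserves brackets evaluated at
   lambda := -d - lambda follows from skew-symmetry. *)

Section Linear.
Variables (A B : lmodType C) (f : A -> B).
Hypothesis f_lin : lin f.

Let fL : {linear A -> B} := HB.pack f (GRing.isLinear.Build C A B *:%R f f_lin).

Lemma lin0 : f 0 = 0. Proof. exact: (linear0 fL). Qed.
Lemma linD x y : f (x + y) = f x + f y. Proof. exact: (linearD fL). Qed.
Lemma linN x : f (- x) = - f x. Proof. exact: (linearN fL). Qed.
Lemma linZ k x : f (k *: x) = k *: f x. Proof. exact: (linearZ_LR fL). Qed.
Lemma lin_sum (I : Type) (r : seq I) (P : pred I) (F : I -> A) :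
  f (\sum_(i <- r | P i) F i) = \sum_(i <- r | P i) f (F i).
Proof. exact: (linear_sum fL). Qed.

End Linear.

Lemma lin_comp (A B X : lmodType C) (f : B -> X) (g : A -> B) :
  lin f -> lin g -> lin (fun a => f (g a)).
Proof. by move=> f_lin g_lin k u v; rewrite g_lin f_lin. Qed.

Lemma lin_can (A B : lmodType C) (f : A -> B) (g : B -> A) :
  lin f -> cancel f g -> cancel g f -> lin g.
Proof. by move=> f_lin fK gK k u v; apply: (can_inj fK); rewrite gK f_lin !gK. Qed.

Lemma lmap_comp (A B X A' B' X' : lmodType C) (f : nat -> A -> B -> X)
    (h : X -> X') (g : A' -> A) (k : B' -> B) :
  lmap f -> lin h -> lin g -> lin k ->
  lmap (fun n a b => h (f n (g a) (k b))).
Proof.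
move=> [f_bilin f_local] h_lin g_lin k_lin; split=> [n|a b].
  split=> [b|a]; apply: lin_comp h_lin _.
    exact: lin_comp ((f_bilin n).1 _) g_lin.
  exact: lin_comp ((f_bilin n).2 _) k_lin.
have [N fN] := f_local (g a) (k b).
by exists N => n /fN ->; apply: lin0.
Qed.

Lemma iter_morph (V W : Type) (f : V -> W) (T : V -> V) (T' : W -> W) n v :
  (forall v, f (T v) = T' (f v)) -> f (iter n T v) = iter n T' (f v).
Proof. by move=> fT; elim: n => //= n <-. Qed.

Lemma sum_iter_supp (V : lmodType C) (g : nat -> V) (T : V -> V) N M :
  T 0 = 0 -> (forall n, (N <= n)%N -> g n = 0) -> (N <= M)%N ->
  \sum_(i < M) iter i T (g i) = \sum_(i < N) iter i T (g i).
Proof.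
move=> T0 gN NM; rewrite [RHS](big_ord_widen M (fun i => iter i T (g i)) NM).
rewrite [RHS]big_mkcond; apply: eq_bigr => i _.
by case: ltnP => // /gN ->; apply: iter_fix.
Qed.

Lemma pevE (V : lmodType C) (g : nat -> V) (T : V -> V) N :
  T 0 = 0 -> (forall n, (N <= n)%N -> g n = 0) ->
  pev g T = \sum_(i < N) iter i T (g i).
Proof.
move=> T0 gN; have g_pdeg : forall n, (pdeg g <= n)%N -> g n = 0.
  by apply: (epsilon_spec (inhabits 0%N) (fun N => forall n, (N <= n)%N -> g n = 0));
    exists N.
rewrite /pev -(@sum_iter_supp _ g T (pdeg g) (maxn N (pdeg g))) ?leq_maxr //.
by rewrite (@sum_iter_supp _ g T N) ?leq_maxl.
Qed.

Lemma lin_pev (V W : lmodType C) (f : V -> W) (g : nat -> V) T T' :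
  lin f -> local g -> T 0 = 0 -> T' 0 = 0 -> (forall v, f (T v) = T' (f v)) ->
  f (pev g T) = pev (fun n => f (g n)) T'.
Proof.
move=> f_lin [N gN] T0 T'0 fT.
rewrite (pevE T0 gN) (@pevE _ _ _ N T'0); last by move=> n /gN ->; apply: lin0.
by rewrite lin_sum //; apply: eq_bigr => i _; apply: iter_morph.
Qed.

Lemma sc0 (V : lmodType C) l : sc l (0 : V) = 0.
Proof. exact: scaler0. Qed.

Lemma mdsc0 (V : lmodType C) (d : V -> V) l : lin d -> mdsc d l 0 = 0.
Proof. by move=> d_lin; rewrite /mdsc lin0 // scaler0 subr0 oppr0. Qed.

Lemma lin_sc (V W : lmodType C) (f : V -> W) l v :
  lin f -> f (sc l v) = sc l (f v).
Proof. by move=> f_lin; rewrite /sc (linZ f_lin). Qed.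

Lemma lin_mdsc (V W : lmodType C) (f : V -> W) (d : V -> V) (d' : W -> W) l v :
  lin f -> (forall v, f (d v) = d' (f v)) -> f (mdsc d l v) = mdsc d' l (f v).
Proof.
by move=> f_lin fd; rewrite /mdsc (linD f_lin) !(linN f_lin) (linZ f_lin) fd.
Qed.

Section TransportedMaps.
Variables (L H : lmodType C) (alpha alpha_inv : H -> H) (beta_inv : L -> L).
Hypothesis alpha_lin : lin alpha.

Lemma lb_chi_ab (chi : nat -> L -> L -> H) :
  lmap chi -> forall p q l,
  lb (chi_ab alpha beta_inv chi) p q (sc l) =
  alpha (lb chi (beta_inv p) (beta_inv q) (sc l)).
Proof.
move=> [_ chi_local] p q l; symmetry.
exact: lin_pev (chi_local _ _) (sc0 _ _) (sc0 _ _) (fun v => lin_sc l v alpha_lin).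
Qed.

Lemma lb_rho_ab (rho : nat -> L -> H -> H) :
  lmap rho -> forall p h l,
  lb (rho_ab alpha alpha_inv beta_inv rho) p h (sc l) =
  alpha (lb rho (beta_inv p) (alpha_inv h) (sc l)).
Proof.
move=> [_ rho_local] p h l; symmetry.
exact: lin_pev (rho_local _ _) (sc0 _ _) (sc0 _ _) (fun v => lin_sc l v alpha_lin).
Qed.

Lemma lb_rho_ab_mdsc (rho : nat -> L -> H -> H) (d : H -> H) :
  lin d -> (forall v, alpha (d v) = d (alpha v)) -> lmap rho -> forall p h l,
  lb (rho_ab alpha alpha_inv beta_inv rho) p h (mdsc d l) =
  alpha (lb rho (beta_inv p) (alpha_inv h) (mdsc d l)).
Proof.
move=> d_lin alpha_d [_ rho_local] p h l; symmetry.
exact: lin_pev (rho_local _ _) (mdsc0 _ d_lin) (mdsc0 _ d_lin)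
  (fun v => lin_mdsc l v alpha_lin alpha_d).
Qed.

End TransportedMaps.

Lemma is_aut_inv (V : lmodType C) (A : NLCA V) (f g : V -> V) :
  is_aut A f -> cancel f g -> cancel g f -> is_aut A g.
Proof.
move=> [_ f_lin f_d f_br f_nij] fK gK; split.
- by exists f.
- exact: lin_can f_lin fK gK.
- by move=> v; apply: (can_inj fK); rewrite f_d !gK.
- by move=> a b l; apply: (can_inj fK); rewrite f_br !gK.
- by move=> v; apply: (can_inj fK); rewrite f_nij !gK.
Qed.

Lemma lb_mdscE (V : lmodType C) (d : V -> V) (br : nat -> V -> V -> V) a b l :
  is_LCA d br -> lb br a b (mdsc d l) = - lb br b a (sc l).
Proof. by move=> [_ [_ [_ [_ [skew _]]]]]; rewrite skew opprK. Qed.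

Lemma aut_lb_mdsc (V : lmodType C) (A : NLCA V) (f : V -> V) :
  is_aut A f -> forall a b l,
  f (lb (br A) a b (mdsc (dd A) l)) = lb (br A) (f a) (f b) (mdsc (dd A) l).
Proof.
move=> [_ f_lin _ f_br _] a b l.
by rewrite !(lb_mdscE _ _ _ (NLCA_LCA A)) linN // f_br.
Qed.

Theorem lemma6p2 (L H : lmodType C) (AL : NLCA L) (AH : NLCA H)
    (chi : nat -> L -> L -> H) (rho : nat -> L -> H -> H) (Phi : L -> H)
    (alpha alpha_inv : H -> H) (beta beta_inv : L -> L) :
  is_na_cocycle AL AH chi rho Phi ->
  is_aut AH alpha -> cancel alpha alpha_inv -> cancel alpha_inv alpha ->
  is_aut AL beta -> cancel beta beta_inv -> cancel beta_inv beta ->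
  is_na_cocycle AL AH (chi_ab alpha beta_inv chi)
    (rho_ab alpha alpha_inv beta_inv rho) (Phi_ab alpha beta_inv Phi).
Proof.
move=> [chi_lmap [rho_lmap [Phi_lin [coc_i [coc_ii [coc_iii coc_iv]]]]]].
move=> alpha_aut alphaK alpha_invK beta_aut betaK beta_invK.
have beta_inv_aut := is_aut_inv beta_aut betaK beta_invK.
have [_ alpha_lin alpha_d alpha_br alpha_Q] := alpha_aut.
have [_ beta_inv_lin _ beta_inv_br beta_inv_N] := beta_inv_aut.
have [_ alpha_inv_lin _ _ alpha_inv_Q] := is_aut_inv alpha_aut alphaK alpha_invK.
have [dH_lin _] := NLCA_LCA AH.
have chiE := lb_chi_ab beta_inv alpha_lin chi_lmap.
have rhoE := lb_rho_ab alpha_inv beta_inv alpha_lin rho_lmap.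
have rho_mdscE := lb_rho_ab_mdsc alpha_inv beta_inv alpha_lin dH_lin alpha_d rho_lmap.
have beta_inv_br_mdsc := aut_lb_mdsc beta_inv_aut.
rewrite /Phi_ab; split; [|split; [|split; [|split; [|split; [|split]]]]].
- exact: (lmap_comp chi_lmap alpha_lin beta_inv_lin beta_inv_lin).
- exact: (lmap_comp rho_lmap alpha_lin beta_inv_lin alpha_inv_lin).
- exact: (lin_comp alpha_lin (lin_comp Phi_lin beta_inv_lin)).
- move=> p q h l m; rewrite !rhoE !chiE !alphaK !beta_inv_br.
  have := congr1 alpha (coc_i (beta_inv p) (beta_inv q) (alpha_inv h) l m).
  by rewrite !(linD alpha_lin, linN alpha_lin) alpha_br alpha_invK.
- move=> p q r l m.
  rewrite !rhoE !rho_mdscE !chiE !alphaK !beta_inv_br !beta_inv_br_mdsc.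
  have := congr1 alpha (coc_ii (beta_inv p) (beta_inv q) (beta_inv r) l m).
  by rewrite !(linD alpha_lin, linN alpha_lin) (lin0 alpha_lin).
- move=> p h l; rewrite !rhoE !beta_inv_N !alpha_inv_Q.
  have := congr1 alpha (coc_iii (beta_inv p) (alpha_inv h) l).
  by rewrite !(linD alpha_lin, linN alpha_lin, alpha_Q, alpha_br, alpha_invK).
- move=> p q l; rewrite !rhoE !rho_mdscE !chiE !alphaK.
  rewrite !(linD beta_inv_lin, linN beta_inv_lin, beta_inv_N, beta_inv_br).
  have := congr1 alpha (coc_iv (beta_inv p) (beta_inv q) l).
  by rewrite !(linD alpha_lin, linN alpha_lin, lin0 alpha_lin, alpha_Q, alpha_br).
Qed.
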